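(* Let $D=\{z\in\mathbb{C}:|z|<1\}$, $\mathbb{T}=\partial D$, and let $A_0(\hat{\mathbb{C}}\setminus\overline{D})$ be the space of functions $f:\{z\in\mathbb{C}:|z|\ge 1\}\to\mathbb{C}$ that are continuous on $\{|z|\ge1\}$, holomorphic on $\{|z|>1\}$ and satisfy $\lim_{z\to\infty}f(z)=0$, endowed with the topology of uniform convergence on compact subsets of $\{z\in\mathbb{C}:|z|\ge1\}$. Then the set of functions $f\in A_0(\hat{\mathbb{C}}\setminus\overline{D})$ such that $f\restriction_{\mathbb{T}}\in Z$ is a dense $G_\delta$ subset of $A_0(\hat{\mathbb{C}}\setminus\overline{D})$.
   Context: A function $g$ on $\mathbb{T}$ is identified with the $2\pi$-periodic function $y\mapsto g(e^{iy})$ on $\mathbb{R}$, and one writes $g(y)$ for $g(e^{iy})$. The class $Z$ consists of all continuous $f:\mathbb{T}\to\mathbb{C}$ such that for every $\theta\in\mathbb{R}$ $$\limsup_{y\to\theta^+}\left|\frac{\operatorname{Re}f(y)-\operatorname{Re}f(\theta)}{y-\theta}\right|=+\infty\quad\text{and}\quad \limsup_{y\to\theta^+}\left|\frac{\operatorname{Im}f(y)-\operatorname{Im}f(\theta)}{y-\theta}\right|=+\infty.$$ *)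

From Stdlib Require Import Reals List.
From Coquelicot Require Import Coquelicot.
Open Scope R_scope.

Definition expi (y : R) : C := (cos y, sin y).

Definition ext_closed (z : C) : Prop := 1 <= Cmod z.

Definition compactC (K : C -> Prop) : Prop :=
  forall (I : Type) (O : I -> C -> Prop),
    (forall i, open (O i)) ->
    (forall z, K z -> exists i, O i z) ->
    exists l : list I, forall z, K z -> exists i, In i l /\ O i z.

Definition C_differentiable (f : C -> C) (z : C) : Prop :=
  @ex_derive C_AbsRing C_NormedModule f z.

(* The space A_0(Ĉ \ closed D).  A function on {|z| >= 1} is represented by
   f : C -> C normalised to be 0 on the open disc, so that the representation
   is bijective. *)
Definition A0 (f : C -> C) : Prop :=
  (forall z, ext_closed z -> forall eps, 0 < eps -> exists delta, 0 < delta /\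
     forall w, ext_closed w -> Cmod (Cminus w z) < delta ->
       Cmod (Cminus (f w) (f z)) < eps) /\
  (forall z, 1 < Cmod z -> C_differentiable f z) /\
  (forall eps, 0 < eps -> exists M, forall z, M < Cmod z -> Cmod (f z) < eps) /\
  (forall z, Cmod z < 1 -> f z = 0).

(* Open subsets of A0 for the topology of uniform convergence on compact
   subsets of {|z| >= 1}: the open set is U ∩ A0. *)
Definition A0_open (U : (C -> C) -> Prop) : Prop :=
  forall f, A0 f -> U f ->
    exists (K : C -> Prop) (eps : R),
      compactC K /\ (forall z, K z -> ext_closed z) /\ 0 < eps /\
      forall g, A0 g -> (forall z, K z -> Cmod (Cminus (g z) (f z)) < eps) -> U g.

Definition A0_Gdelta (S : (C -> C) -> Prop) : Prop :=
  exists U : nat -> (C -> C) -> Prop,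
    (forall n, A0_open (U n)) /\
    forall f, A0 f -> (S f <-> forall n, U n f).

Definition A0_dense (S : (C -> C) -> Prop) : Prop :=
  forall U, A0_open U -> (exists f, A0 f /\ U f) -> exists g, A0 g /\ U g /\ S g.

Definition limsup_right_infinite (h : R -> R) (theta : R) : Prop :=
  forall M delta, 0 < delta -> exists y, theta < y < theta + delta /\
    M < Rabs ((h y - h theta) / (y - theta)).

Definition class_Z (g : C -> C) : Prop :=
  (forall z, Cmod z = 1 -> forall eps, 0 < eps -> exists delta, 0 < delta /\
     forall w, Cmod w = 1 -> Cmod (Cminus w z) < delta ->
       Cmod (Cminus (g w) (g z)) < eps) /\
  forall theta : R,
    limsup_right_infinite (fun y => fst (g (expi y))) theta /\
    limsup_right_infinite (fun y => snd (g (expi y))) theta.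

From Stdlib Require Import Reals Lra Lia Psatz ZArith List Classical ClassicalEpsilon.
From Coquelicot Require Import Coquelicot.

(* [class_Z] is the intersection over [k] of the sets [steep k] of functions whose real and
   imaginary parts on the circle have, right of every point and within distance [1/(k+1)], a
   difference quotient larger than [k].  A strict inequality survives small moves of the point
   and uniformly small perturbations of the function, so by compactness of the circle each
   [steep k] is open for uniform convergence on the circle.
   For density, the dilation [z |-> f (lam z)] with [lam > 1] is uniformly close to [f] on a
   compact set and holomorphic across the circle, hence right-Lipschitz there.  Adding [c h]
   with [h z = sum_n 4^-n z^-(29^n)], whose boundary real part is the Weierstrass function
   [sum_n 4^-n cos (29^n y)] and imaginary part a shift of its negative, makes both parts have
   unbounded right difference quotients everywhere. *)

Lemma cos_lipschitz x y : Rabs (cos x - cos y) <= Rabs (x - y).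
Proof.
  destruct (MVT_abs cos (fun t => - sin t) y x) as [c [-> _]].
  { intros; apply derivable_pt_lim_cos. }
  rewrite Rabs_Ropp. rewrite <- (Rmult_1_l (Rabs (x - y))) at 2.
  apply Rmult_le_compat_r; [apply Rabs_pos|]. apply Rabs_le, SIN_bound.
Qed.

Lemma sin_lipschitz x y : Rabs (sin x - sin y) <= Rabs (x - y).
Proof.
  destruct (MVT_abs sin cos y x) as [c [-> _]].
  { intros; apply derivable_pt_lim_sin. }
  rewrite <- (Rmult_1_l (Rabs (x - y))) at 2.
  apply Rmult_le_compat_r; [apply Rabs_pos|]. apply Rabs_le, COS_bound.
Qed.

Lemma cos_period_Z x (k : Z) : cos (x + 2 * IZR k * PI) = cos x.
Proof.
  destruct (Z_le_gt_dec 0 k) as [Hk|Hk].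
  - rewrite <- (Z2Nat.id k Hk), <- INR_IZR_INZ. apply cos_period.
  - replace (IZR k) with (- INR (Z.to_nat (- k))).
    + rewrite <- (cos_period (x + 2 * - INR (Z.to_nat (- k)) * PI) (Z.to_nat (- k))).
      f_equal; ring.
    + rewrite INR_IZR_INZ, Z2Nat.id, opp_IZR by lia. ring.
Qed.

Lemma sin_period_Z x (k : Z) : sin (x + 2 * IZR k * PI) = sin x.
Proof.
  rewrite <- cos_shift, <- (cos_shift x).
  replace (PI / 2 - (x + 2 * IZR k * PI)) with (PI / 2 - x + 2 * IZR (- k) * PI)
    by (rewrite opp_IZR; ring).
  apply cos_period_Z.
Qed.

Lemma sin_IZR_PI (k : Z) : sin (IZR k * PI) = 0.
Proof. apply sin_eq_0_1. now exists k. Qed.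

Lemma cos_odd_mult_IZR_PI (k : Z) j phi :
  cos (INR (2 * j + 1) * (IZR k * PI) + phi) = cos (IZR k * PI) * cos phi.
Proof.
  replace (INR (2 * j + 1) * (IZR k * PI) + phi)
    with ((IZR k * PI + phi) + 2 * IZR (Z.of_nat j * k) * PI)
    by (rewrite mult_IZR, <- INR_IZR_INZ, plus_INR, mult_INR; simpl; ring).
  rewrite cos_period_Z, cos_plus, sin_IZR_PI. ring.
Qed.

Lemma pow_le_1_compat x n : 0 <= x <= 1 -> x ^ n <= 1.
Proof. intros Hx. rewrite <- (pow1 n). apply pow_incr, Hx. Qed.

Lemma pow_le_pow_decr x m n : 0 <= x <= 1 -> (m <= n)%nat -> x ^ n <= x ^ m.
Proof.
  intros Hx Hmn. replace n with (m + (n - m))%nat by lia. rewrite pow_add.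
  assert (0 <= x ^ m) by (apply pow_le; lra).
  assert (x ^ (n - m) <= 1) by (apply pow_le_1_compat; lra). nra.
Qed.

Lemma INR_succ_le_pow x n : 2 <= x -> INR n + 1 <= x ^ n.
Proof.
  intros Hx. induction n as [|n IH]; [simpl; lra|].
  rewrite S_INR, <- tech_pow_Rmult. generalize (pos_INR n); nra.
Qed.

Lemma exists_INR_gt X : exists m : nat, X < INR m.
Proof.
  destruct (Rle_or_lt X 0) as [H|H]; [exists 1%nat; simpl; lra|].
  destruct (archimed X) as [H1 _].
  exists (Z.to_nat (up X)). rewrite INR_IZR_INZ, Z2Nat.id by (apply le_IZR; lra). lra.
Qed.

Lemma exists_half_pow_lt eps : 0 < eps -> exists N : nat, (/2)^N < eps.
Proof.
  intros He. destruct (exists_INR_gt (/ eps)) as [N HN]. exists N.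
  assert (/ eps < 2 ^ N) by (generalize (INR_succ_le_pow 2 N ltac:(lra)); lra).
  rewrite pow_inv, <- (Rinv_inv eps). apply Rinv_lt_contravar; [|lra].
  apply Rmult_lt_0_compat; [apply Rinv_0_lt_compat|apply pow_lt]; lra.
Qed.

Lemma ex_series_geom_dominated (u : nat -> R) K :
  (forall n, Rabs (u n) <= K * (/2)^n) -> ex_series u.
Proof.
  intros H. apply ex_series_Rabs.
  apply (@ex_series_le R_AbsRing R_CompleteNormedModule _ (fun n => K * (/2)^n)).
  - intros n. unfold norm; simpl; unfold abs; simpl. rewrite Rabs_Rabsolu. apply H.
  - apply (ex_series_scal_l K (fun n => (/2)^n)), ex_series_geom. rewrite Rabs_right; lra.
Qed.

Lemma Series_geom_dominated_bound (u : nat -> R) K :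
  (forall n, Rabs (u n) <= K * (/2)^n) -> Rabs (Series u) <= 2 * K.
Proof.
  intros H. eapply Rle_trans.
  { apply Series_Rabs, ex_series_geom_dominated with K. intros n; rewrite Rabs_Rabsolu; auto. }
  replace (2 * K) with (Series (fun n => K * (/2)^n)).
  - apply Series_le; [intros n; split; [apply Rabs_pos|auto]|].
    apply (ex_series_scal_l K (fun n => (/2)^n)), ex_series_geom. rewrite Rabs_right; lra.
  - rewrite (Series_scal_l K (fun n => (/2)^n)).
    rewrite (is_series_unique _ _ (is_series_geom (/2) ltac:(rewrite Rabs_right; lra))).
    field.
Qed.

Lemma Series_nonneg (u : nat -> R) : (forall n, 0 <= u n) -> ex_series u -> 0 <= Series u.
Proof.
  intros H He. replace 0 with (Series (fun _ => 0 * 1)).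
  - apply Series_le; auto. intros n; specialize (H n); lra.
  - rewrite Series_scal_l. ring.
Qed.

(** * A Weierstrass function *)

Definition freq (n : nat) : nat := (29 ^ n)%nat.

Definition weierstrass (y : R) : R := Series (fun n => (/4)^n * cos (INR (freq n) * y)).

Definition unbounded_right_slopes (H : R -> R) : Prop :=
  forall theta M delta, 0 < delta -> exists y, theta < y < theta + delta /\
    M * (y - theta) < Rabs (H y - H theta).

Lemma INR_freq n : INR (freq n) = 29 ^ n.
Proof. unfold freq. rewrite pow_INR. f_equal. simpl; ring. Qed.

Lemma freq_odd n : exists j, freq n = (2 * j + 1)%nat.
Proof.
  induction n as [|n [j Hj]]; [now exists 0%nat|].
  exists (29 * j + 14)%nat. unfold freq in *. simpl Nat.pow. rewrite Hj. lia.
Qed.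

Lemma freq_1mod4 n : exists j, freq n = (4 * j + 1)%nat.
Proof.
  induction n as [|n [j Hj]]; [now exists 0%nat|].
  exists (29 * j + 7)%nat. unfold freq in *. simpl Nat.pow. rewrite Hj. lia.
Qed.

Lemma quarter_pow_le_half_pow n : (/4)^n <= (/2)^n.
Proof. apply pow_incr; lra. Qed.

Definition weierstrass_increment (y t : R) (n : nat) : R :=
  (/4)^n * (cos (INR (freq n) * y) - cos (INR (freq n) * t)).

Lemma weierstrass_increment_series y t :
  weierstrass y - weierstrass t = Series (weierstrass_increment y t).
Proof.
  assert (Hex : forall x, ex_series (fun n => (/4)^n * cos (INR (freq n) * x))).
  { intros x. apply ex_series_geom_dominated with 1. intros n.
    rewrite Rabs_mult, Rabs_right by (apply Rle_ge, pow_le; lra).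
    assert (Rabs (cos (INR (freq n) * x)) <= 1) by (apply Rabs_le, COS_bound).
    generalize (quarter_pow_le_half_pow n) (pow_le (/4) n ltac:(lra)). nra. }
  unfold weierstrass. rewrite <- Series_minus by apply Hex.
  apply Series_ext. intros n. unfold weierstrass_increment. ring.
Qed.

Lemma ex_series_weierstrass_increment y t : ex_series (weierstrass_increment y t).
Proof.
  apply ex_series_geom_dominated with 2. intros n. unfold weierstrass_increment.
  rewrite Rabs_mult, Rabs_right by (apply Rle_ge, pow_le; lra).
  assert (Rabs (cos (INR (freq n) * y) - cos (INR (freq n) * t)) <= 2).
  { assert (-1 <= cos (INR (freq n) * y) <= 1) by apply COS_bound.
    assert (-1 <= cos (INR (freq n) * t) <= 1) by apply COS_bound.
    apply Rabs_le; lra. }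
  generalize (quarter_pow_le_half_pow n) (pow_le (/4) n ltac:(lra)). nra.
Qed.

(* Each term is [(29/4)^n]-Lipschitz, so the first [m] terms sum to at most a geometric
   sum [((29/4)^m - 1) / (25/4)]. *)
Lemma weierstrass_head_bound m y t : (0 < m)%nat ->
  Rabs (sum_f_R0 (weierstrass_increment y t) (pred m)) <= 4 / 25 * (29/4)^m * Rabs (y - t).
Proof.
  intros Hm. eapply Rle_trans; [apply sum_f_R0_triangle|].
  apply Rle_trans with (sum_f_R0 (fun n => (29/4)^n * Rabs (y - t)) (pred m)).
  - apply sum_Rle. intros n _. unfold weierstrass_increment.
    rewrite Rabs_mult, Rabs_right by (apply Rle_ge, pow_le; lra).
    eapply Rle_trans; [apply Rmult_le_compat_l; [apply pow_le; lra|apply cos_lipschitz]|].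
    rewrite <- Rmult_minus_distr_l, Rabs_mult, Rabs_right, INR_freq by (apply Rle_ge, pos_INR).
    replace ((29/4)^n) with ((/4)^n * 29^n) by (rewrite <- Rpow_mult_distr; f_equal; field).
    apply Req_le; ring.
  - rewrite <- scal_sum.
    assert (HG := GP_finite (29/4) (pred m)).
    replace (pred m + 1)%nat with m in HG by lia.
    assert (0 <= Rabs (y - t)) by apply Rabs_pos.
    assert (Hsum : sum_f_R0 (fun n => (29/4)^n) (pred m) <= 4 / 25 * (29/4)^m) by lra.
    change (fun n => (29/4)^n) with (pow (29/4)) in Hsum. nra.
Qed.

Lemma one_le_Series_cos_bump xi : - /2 <= xi <= /2 ->
  1 <= Series (fun k => (/4)^k * (1 + cos (INR (freq k) * (PI * xi)))).
Proof.
  intros Hxi. set (e := fun k => (/4)^k * (1 + cos (INR (freq k) * (PI * xi)))).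
  assert (He_pos : forall k, 0 <= e k).
  { intros k. unfold e. apply Rmult_le_pos; [apply pow_le; lra|].
    assert (-1 <= cos (INR (freq k) * (PI * xi)) <= 1) by apply COS_bound. lra. }
  assert (Hex : ex_series e).
  { apply ex_series_geom_dominated with 2. intros k.
    rewrite Rabs_right by (apply Rle_ge, He_pos). unfold e.
    assert (cos (INR (freq k) * (PI * xi)) <= 1) by apply COS_bound.
    generalize (quarter_pow_le_half_pow k) (pow_le (/4) k ltac:(lra)) (He_pos k). unfold e. nra. }
  rewrite (Series_incr_1 e Hex).
  assert (0 <= Series (fun k => e (S k))).
  { apply Series_nonneg; [intros; apply He_pos|]. apply (ex_series_incr_1 e), Hex. }
  assert (1 <= e 0%nat).
  { unfold e, freq. simpl. rewrite !Rmult_1_l.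
    assert (0 <= cos (PI * xi)) by (apply cos_ge_0; generalize PI_RGT_0; nra). lra. }
  lra.
Qed.

(* At the grid point [y = (alpha + 1) pi / 29^m] every term of index [>= m] has the same
   sign, since [29^k] is odd. *)
Lemma weierstrass_tail_bound m (alpha : Z) xi : - /2 <= xi <= /2 ->
  let B := INR (freq m) in
  (/4)^m <= Rabs (Series (fun k => weierstrass_increment
    ((IZR alpha + 1) * PI / B) ((IZR alpha + xi) * PI / B) (m + k))).
Proof.
  intros Hxi B.
  assert (HB : 0 < B) by (unfold B; rewrite INR_freq; apply pow_lt; lra).
  set (sigma := cos (IZR alpha * PI)).
  assert (Hsigma : Rabs sigma = 1).
  { assert (sigma * sigma = 1).
    { unfold sigma. generalize (sin2_cos2 (IZR alpha * PI)). rewrite sin_IZR_PI. unfold Rsqr. lra. }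
    destruct (Rle_or_lt 0 sigma); [rewrite Rabs_right by lra|rewrite Rabs_left by lra]; nra. }
  rewrite (Series_ext _ (fun k => (/4)^m * - sigma *
    ((/4)^k * (1 + cos (INR (freq k) * (PI * xi)))))).
  - rewrite Series_scal_l, !Rabs_mult, Rabs_Ropp, Hsigma, Rabs_right by (apply Rle_ge, pow_le; lra).
    rewrite Rabs_right by (generalize (one_le_Series_cos_bump xi Hxi); lra).
    generalize (one_le_Series_cos_bump xi Hxi) (pow_le (/4) m ltac:(lra)). nra.
  - intros k. unfold weierstrass_increment. destruct (freq_odd k) as [j Hj].
    assert (Hfreq : INR (freq (m + k)) = B * INR (freq k))
      by (unfold B, freq; rewrite Nat.pow_add_r, mult_INR; reflexivity).
    replace (INR (freq (m + k)) * ((IZR alpha + 1) * PI / B))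
      with (INR (freq k) * (IZR (alpha + 1) * PI) + 0)
      by (rewrite Hfreq, plus_IZR; field; lra).
    replace (INR (freq (m + k)) * ((IZR alpha + xi) * PI / B))
      with (INR (freq k) * (IZR alpha * PI) + INR (freq k) * (PI * xi))
      by (rewrite Hfreq; field; lra).
    rewrite Hj, !cos_odd_mult_IZR_PI, <- Hj, cos_0, plus_IZR, Rmult_plus_distr_r, Rmult_1_l, neg_cos.
    fold sigma. rewrite pow_add. ring.
Qed.

Lemma exists_grid_offset B theta : 0 < B ->
  exists (alpha : Z) xi, - /2 <= xi <= /2 /\ theta = (IZR alpha + xi) * PI / B.
Proof.
  intros HB. assert (HPI := PI_RGT_0).
  exists (up (B * theta / PI + /2) - 1)%Z, (B * theta / PI - IZR (up (B * theta / PI + /2) - 1)).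
  rewrite minus_IZR. destruct (archimed (B * theta / PI + /2)).
  split; [lra|field; lra].
Qed.

(* For [y] the grid point of mesh [pi / 29^m] just right of [theta], the tail beyond [m]
   contributes at least [4^-m], which dominates [(29/4)^m (y - theta)] up to the factor 6
   while the head contributes at most [4/25] of it; [1/6 - 4/25 = 1/150]. *)
Lemma weierstrass_unbounded_right_slopes : unbounded_right_slopes weierstrass.
Proof.
  intros theta M delta Hdelta.
  destruct (exists_INR_gt (150 * Rabs M + 6 / delta)) as [m Hm].
  assert (H6 : 0 < 6 / delta) by (apply Rdiv_lt_0_compat; lra).
  generalize (Rabs_pos M) PI_RGT_0 PI_4; intros HM HPI HPI4.
  assert (Hm0 : (0 < m)%nat) by (destruct m; [simpl in Hm; lra|lia]).
  set (B := INR (freq m)).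
  assert (HB : INR m + 1 <= B) by (unfold B; rewrite INR_freq; apply INR_succ_le_pow; lra).
  set (P := (29/4)^m).
  assert (HP : INR m + 1 <= P) by (apply INR_succ_le_pow; lra).
  assert (HPB : (/4)^m * B = P)
    by (unfold B, P; rewrite INR_freq, <- Rpow_mult_distr; f_equal; field).
  destruct (exists_grid_offset B theta ltac:(lra)) as [alpha [xi [Hxi Htheta]]].
  set (y := (IZR alpha + 1) * PI / B).
  assert (Hyt : y - theta = PI * (1 - xi) / B) by (rewrite Htheta; unfold y; field; lra).
  assert (Hyt_pos : 0 < y - theta)
    by (rewrite Hyt; apply Rdiv_lt_0_compat; [apply Rmult_lt_0_compat|]; lra).
  assert (Hyt_le : (y - theta) * B <= 6)
    by (rewrite Hyt; unfold Rdiv; rewrite Rmult_assoc, Rinv_l by lra; nra).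
  exists y. split.
  { assert (6 / delta < B) by lra.
    assert (6 < delta * B)
      by (replace 6 with (delta * (6 / delta)) by (field; lra); apply Rmult_lt_compat_l; lra).
    split; [lra|]. nra. }
  rewrite weierstrass_increment_series.
  rewrite (Series_incr_n _ m Hm0 (ex_series_weierstrass_increment y theta)).
  assert (Htail := weierstrass_tail_bound m alpha xi Hxi). simpl in Htail. fold B y in Htail.
  rewrite <- Htheta in Htail.
  assert (Hhead := weierstrass_head_bound m y theta Hm0).
  rewrite (Rabs_right (y - theta)) in Hhead by lra. fold P in Hhead.
  assert (Hlow : (y - theta) * P <= 6 * (/4)^m)
    by (rewrite <- HPB; generalize (pow_le (/4) m ltac:(lra)); nra).
  assert (Htri := Rabs_triang_inv (Series (fun k => weierstrass_increment y theta (m + k)))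
                    (- sum_f_R0 (weierstrass_increment y theta) (pred m))).
  rewrite Rabs_Ropp in Htri.
  assert (M * (y - theta) <= Rabs M * (y - theta))
    by (apply Rmult_le_compat_r; [lra|apply Rle_abs]).
  replace (sum_f_R0 (weierstrass_increment y theta) (pred m)
      + Series (fun k => weierstrass_increment y theta (m + k)))
    with (Series (fun k => weierstrass_increment y theta (m + k))
      - - sum_f_R0 (weierstrass_increment y theta) (pred m)) by ring.
  nra.
Qed.

Lemma unbounded_right_slopes_ext F G :
  (forall y, F y = G y) -> unbounded_right_slopes G -> unbounded_right_slopes F.
Proof.
  intros E HG theta M delta Hd. destruct (HG theta M delta Hd) as [y [Hy HM]].
  exists y. rewrite !E. auto.
Qed.

Lemma unbounded_right_slopes_opp_shift H c :
  unbounded_right_slopes H -> unbounded_right_slopes (fun y => - H (y - c)).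
Proof.
  intros HZ theta M delta Hd.
  destruct (HZ (theta - c) M delta Hd) as [y [Hy HM]].
  exists (y + c). split; [lra|].
  replace (y + c - c) with y by ring. replace (y + c - theta) with (y - (theta - c)) by ring.
  replace (- H y - - H (theta - c)) with (- (H y - H (theta - c))) by ring.
  rewrite Rabs_Ropp. exact HM.
Qed.

Definition locally_right_lipschitz (F : R -> R) : Prop :=
  forall theta, exists B d, 0 < d /\ forall y, theta < y < theta + d ->
    Rabs (F y - F theta) <= B * (y - theta).

Lemma unbounded_right_slopes_add_scal F H c :
  locally_right_lipschitz F -> unbounded_right_slopes H -> 0 < c ->
  unbounded_right_slopes (fun y => F y + c * H y).
Proof.
  intros HF HZ Hc theta M delta Hd.
  destruct (HF theta) as [B [d [Hd0 HB]]].
  destruct (HZ theta ((M + B) / c) (Rmin delta d) ltac:(apply Rmin_glb_lt; lra)) as [y [Hy HM]].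
  assert (Hy1 : y < theta + delta) by (generalize (Rmin_l delta d); lra).
  assert (Hy2 : y < theta + d) by (generalize (Rmin_r delta d); lra).
  exists y. split; [lra|]. specialize (HB y ltac:(lra)).
  assert (c * Rabs (H y - H theta) > (M + B) * (y - theta)).
  { replace ((M + B) * (y - theta)) with (c * ((M + B) / c * (y - theta))) by (field; lra).
    apply Rmult_lt_compat_l; lra. }
  replace (F y + c * H y - (F theta + c * H theta))
    with (c * (H y - H theta) - - (F y - F theta)) by ring.
  generalize (Rabs_triang_inv (c * (H y - H theta)) (- (F y - F theta))).
  rewrite Rabs_Ropp, Rabs_mult, (Rabs_right c) by lra. lra.
Qed.

Lemma unbounded_right_slopes_limsup H :
  unbounded_right_slopes H -> forall theta, limsup_right_infinite H theta.
Proof.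
  intros HZ theta M delta Hd.
  destruct (HZ theta M delta Hd) as [y [Hy HM]]. exists y. split; [exact Hy|].
  unfold Rdiv. rewrite Rabs_mult, Rabs_inv, (Rabs_right (y - theta)) by lra.
  apply (Rmult_lt_reg_r (y - theta)); [lra|]. rewrite Rmult_assoc, Rinv_l by lra. lra.
Qed.

(** * Complex estimates and series *)

Lemma Rabs_snd_le_Cmod (c : C) : Rabs (snd c) <= Cmod c.
Proof. eapply Rle_trans; [apply Rmax_r|apply Rmax_Cmod]. Qed.

Lemma Cmod_le_Rabs_fst_snd (c : C) : Cmod c <= Rabs (fst c) + Rabs (snd c).
Proof.
  destruct c as [x y]. unfold Cmod; simpl.
  rewrite <- (sqrt_Rsqr (Rabs x + Rabs y)) by (generalize (Rabs_pos x) (Rabs_pos y); lra).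
  apply sqrt_le_1_alt.
  assert (Hx := Rsqr_abs x). assert (Hy := Rsqr_abs y). unfold Rsqr in *.
  generalize (Rabs_pos x) (Rabs_pos y); nra.
Qed.

Lemma Cmod_RtoC_mult x c : Cmod (Cmult (RtoC x) c) = Rabs x * Cmod c.
Proof. rewrite Cmod_mult, Cmod_R. reflexivity. Qed.

Lemma Cmod_ge_1_neq_0 z : 1 <= Cmod z -> z <> RtoC 0.
Proof. intros H E. rewrite E, Cmod_0 in H. lra. Qed.

Lemma Cmod_Cinv_le_1 z : 1 <= Cmod z -> Cmod (Cinv z) <= 1.
Proof.
  intros H. rewrite Cmod_inv by (apply Cmod_ge_1_neq_0, H).
  rewrite <- Rinv_1. apply Rinv_le_contravar; lra.
Qed.

Lemma Cmod_sub_ge z z0 : Cmod z0 - Cmod (Cminus z z0) <= Cmod z.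
Proof.
  assert (H := Cmod_triangle z (Copp (Cminus z z0))).
  replace (Cplus z (Copp (Cminus z z0))) with z0 in H by (unfold Cminus; ring).
  rewrite Cmod_opp in H. lra.
Qed.

Lemma Cinv_lipschitz w z : 1 <= Cmod w -> 1 <= Cmod z ->
  Cmod (Cminus (Cinv w) (Cinv z)) <= Cmod (Cminus w z).
Proof.
  intros Hw Hz.
  replace (Cminus (Cinv w) (Cinv z)) with (Cmult (Cmult (Copp (Cminus w z)) (Cinv w)) (Cinv z))
    by (unfold Cminus; field; split; apply Cmod_ge_1_neq_0; auto).
  rewrite !Cmod_mult, Cmod_opp.
  assert (Hw' := Cmod_Cinv_le_1 w Hw). assert (Hz' := Cmod_Cinv_le_1 z Hz).
  assert (Cmod (Cinv w) * Cmod (Cinv z) <= 1)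
    by (rewrite <- (Rmult_1_l 1); apply Rmult_le_compat; auto; apply Cmod_ge_0).
  rewrite Rmult_assoc. rewrite <- (Rmult_1_r (Cmod (Cminus w z))) at 2.
  apply Rmult_le_compat_l; auto. apply Cmod_ge_0.
Qed.

Lemma Cmod_Cpow_le_1 u N : Cmod u <= 1 -> Cmod (Cpow u N) <= 1.
Proof. intros H. rewrite Cmod_pow. apply pow_le_1_compat. split; [apply Cmod_ge_0|auto]. Qed.

Lemma Cpow_lipschitz u v N : Cmod u <= 1 -> Cmod v <= 1 ->
  Cmod (Cminus (Cpow u N) (Cpow v N)) <= INR N * Cmod (Cminus u v).
Proof.
  intros Hu Hv. induction N as [|N IH].
  - simpl. unfold Cminus. rewrite Cplus_opp_r, Cmod_0. lra.
  - simpl Cpow.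
    replace (Cminus (Cmult u (Cpow u N)) (Cmult v (Cpow v N)))
      with (Cplus (Cmult u (Cminus (Cpow u N) (Cpow v N))) (Cmult (Cminus u v) (Cpow v N)))
      by (unfold Cminus; ring).
    eapply Rle_trans; [apply Cmod_triangle|]. rewrite !Cmod_mult, S_INR.
    assert (Cmod (Cpow v N) <= 1) by (apply Cmod_Cpow_le_1; auto).
    generalize (Cmod_ge_0 u) (Cmod_ge_0 (Cminus u v)) (Cmod_ge_0 (Cpow v N))
      (Cmod_ge_0 (Cminus (Cpow u N) (Cpow v N))). nra.
Qed.

Lemma Cmod_Cpow_sub_le_2 u v N : Cmod u <= 1 -> Cmod v <= 1 ->
  Cmod (Cminus (Cpow u N) (Cpow v N)) <= 2.
Proof.
  intros Hu Hv. unfold Cminus. eapply Rle_trans; [apply Cmod_triangle|]. rewrite Cmod_opp.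
  generalize (Cmod_Cpow_le_1 u N Hu) (Cmod_Cpow_le_1 v N Hv). lra.
Qed.

Lemma Cmod_expi y : Cmod (expi y) = 1.
Proof.
  unfold Cmod, expi; simpl.
  replace (cos y * (cos y * 1) + sin y * (sin y * 1)) with 1
    by (generalize (sin2_cos2 y); unfold Rsqr; lra).
  apply sqrt_1.
Qed.

Lemma expi_lipschitz y t : Cmod (Cminus (expi y) (expi t)) <= 2 * Rabs (y - t).
Proof.
  eapply Rle_trans; [apply Cmod_le_Rabs_fst_snd|]. simpl.
  generalize (cos_lipschitz y t) (sin_lipschitz y t). unfold Rminus. lra.
Qed.

Lemma Cinv_expi y : Cinv (expi y) = expi (- y).
Proof.
  unfold Cinv, expi; simpl. rewrite cos_neg, sin_neg.
  replace (cos y * (cos y * 1) + sin y * (sin y * 1)) with 1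
    by (generalize (sin2_cos2 y); unfold Rsqr; lra).
  f_equal; field.
Qed.

Lemma Cpow_expi y N : Cpow (expi y) N = expi (INR N * y).
Proof.
  induction N as [|N IH].
  - unfold expi. simpl. rewrite Rmult_0_l, cos_0, sin_0. reflexivity.
  - simpl Cpow. rewrite IH, S_INR. unfold expi, Cmult; simpl.
    replace ((INR N + 1) * y) with (y + INR N * y) by ring.
    rewrite cos_plus, sin_plus. f_equal; ring.
Qed.

Lemma expi_period x (k : Z) : expi (x + 2 * IZR k * PI) = expi x.
Proof. unfold expi. rewrite cos_period_Z, sin_period_Z. reflexivity. Qed.

Definition CSeries (u : nat -> C) : C :=
  (Series (fun n => fst (u n)), Series (fun n => snd (u n))).

Definition geom_dominated (u : nat -> C) (K : R) : Prop := forall n, Cmod (u n) <= K * (/2)^n.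

Section CSeries.

Variables (u : nat -> C) (Ku : R).
Hypothesis Hu : geom_dominated u Ku.

Lemma ex_series_fst_dominated : ex_series (fun n => fst (u n)).
Proof.
  apply ex_series_geom_dominated with Ku. intros n.
  eapply Rle_trans; [apply re_le_Cmod|apply Hu].
Qed.

Lemma ex_series_snd_dominated : ex_series (fun n => snd (u n)).
Proof.
  apply ex_series_geom_dominated with Ku. intros n.
  eapply Rle_trans; [apply Rabs_snd_le_Cmod|apply Hu].
Qed.

Lemma Cmod_CSeries_le : Cmod (CSeries u) <= 4 * Ku.
Proof.
  eapply Rle_trans; [apply Cmod_le_Rabs_fst_snd|]. unfold CSeries; simpl.
  assert (Rabs (Series (fun n => fst (u n))) <= 2 * Ku).
  { apply Series_geom_dominated_bound. intros n.
    eapply Rle_trans; [apply re_le_Cmod|apply Hu]. }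
  assert (Rabs (Series (fun n => snd (u n))) <= 2 * Ku).
  { apply Series_geom_dominated_bound. intros n.
    eapply Rle_trans; [apply Rabs_snd_le_Cmod|apply Hu]. }
  lra.
Qed.

Lemma geom_dominated_scal c : geom_dominated (fun n => Cmult c (u n)) (Cmod c * Ku).
Proof.
  intros n. rewrite Cmod_mult, Rmult_assoc.
  apply Rmult_le_compat_l; [apply Cmod_ge_0|apply Hu].
Qed.

Lemma CSeries_scal c : CSeries (fun n => Cmult c (u n)) = Cmult c (CSeries u).
Proof.
  assert (H1 := ex_series_fst_dominated). assert (H2 := ex_series_snd_dominated).
  unfold CSeries, Cmult; simpl. f_equal.
  - rewrite Series_minus, !Series_scal_l; [ring| |].
    + apply (ex_series_scal_l (fst c) (fun n => fst (u n))), H1.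
    + apply (ex_series_scal_l (snd c) (fun n => snd (u n))), H2.
  - rewrite Series_plus, !Series_scal_l; [ring| |].
    + apply (ex_series_scal_l (fst c) (fun n => snd (u n))), H2.
    + apply (ex_series_scal_l (snd c) (fun n => fst (u n))), H1.
Qed.

End CSeries.

Lemma geom_dominated_minus u v Ku Kv :
  geom_dominated u Ku -> geom_dominated v Kv ->
  geom_dominated (fun n => Cminus (u n) (v n)) (Ku + Kv).
Proof.
  intros Hu Hv n. unfold Cminus. eapply Rle_trans; [apply Cmod_triangle|].
  rewrite Cmod_opp. generalize (Hu n) (Hv n). lra.
Qed.

Lemma CSeries_minus u v Ku Kv : geom_dominated u Ku -> geom_dominated v Kv ->
  CSeries (fun n => Cminus (u n) (v n)) = Cminus (CSeries u) (CSeries v).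
Proof.
  intros Hu Hv.
  assert (Hu1 := ex_series_fst_dominated u Ku Hu). assert (Hu2 := ex_series_snd_dominated u Ku Hu).
  assert (Hv1 := ex_series_fst_dominated v Kv Hv). assert (Hv2 := ex_series_snd_dominated v Kv Hv).
  unfold CSeries, Cminus, Cplus, Copp; simpl. f_equal.
  - rewrite (Series_ext _ (fun n => fst (u n) - fst (v n))) by (intros; simpl; ring).
    rewrite Series_minus by auto. ring.
  - rewrite (Series_ext _ (fun n => snd (u n) - snd (v n))) by (intros; simpl; ring).
    rewrite Series_minus by auto. ring.
Qed.

Lemma CSeries_ext u v : (forall n, u n = v n) -> CSeries u = CSeries v.
Proof. intros H. unfold CSeries. f_equal; apply Series_ext; intros; rewrite H; reflexivity. Qed.

Lemma CSeries_first_order A B L d KA KB KL :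
  geom_dominated A KA -> geom_dominated B KB -> geom_dominated L KL ->
  CSeries (fun n => Cminus (Cminus (A n) (B n)) (Cmult (L n) d)) =
  Cminus (Cminus (CSeries A) (CSeries B)) (Cmult (CSeries L) d).
Proof.
  intros HA HB HL.
  rewrite (CSeries_ext _ (fun n => Cminus (Cminus (A n) (B n)) (Cmult d (L n))))
    by (intros; f_equal; apply Cmult_comm).
  rewrite (CSeries_minus _ _ (KA + KB) (Cmod d * KL) (geom_dominated_minus A B KA KB HA HB)
    (geom_dominated_scal L KL HL d)).
  rewrite (CSeries_minus A B KA KB HA HB), (CSeries_scal L KL HL d), Cmult_comm. reflexivity.
Qed.

(** * The lacunary function [h] *)

Definition lacunary_term (n : nat) (z : C) : C :=
  Cmult (RtoC ((/4)^n)) (Cpow (Cinv z) (freq n)).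

Definition lacunary (z : C) : C :=
  if Rle_dec 1 (Cmod z) then CSeries (fun n => lacunary_term n z) else RtoC 0.

Lemma freq_ge_1 n : (1 <= freq n)%nat.
Proof. unfold freq. generalize (Nat.pow_nonzero 29 n). lia. Qed.

Lemma lacunary_term_dominated z : 1 <= Cmod z ->
  geom_dominated (fun n => lacunary_term n z) (/ Cmod z).
Proof.
  intros Hz n. unfold lacunary_term.
  rewrite Cmod_RtoC_mult, Rabs_right by (apply Rle_ge, pow_le; lra).
  rewrite Cmod_pow, <- Cmod_inv by (apply Cmod_ge_1_neq_0, Hz).
  set (r := Cmod (Cinv z)).
  assert (Hr : 0 <= r <= 1) by (split; [apply Cmod_ge_0|apply Cmod_Cinv_le_1, Hz]).
  assert (r ^ freq n <= r) by (rewrite <- (pow_1 r) at 2; apply pow_le_pow_decr, freq_ge_1; lra).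
  generalize (quarter_pow_le_half_pow n) (pow_le (/4) n ltac:(lra)) (pow_le r (freq n) ltac:(lra)).
  nra.
Qed.

Lemma Cmod_lacunary_le z : 1 <= Cmod z -> Cmod (lacunary z) <= 4 / Cmod z.
Proof.
  intros Hz. unfold lacunary. destruct (Rle_dec 1 (Cmod z)); [|lra].
  apply Cmod_CSeries_le, lacunary_term_dominated, Hz.
Qed.

Lemma lacunary_lt_1 z : Cmod z < 1 -> lacunary z = RtoC 0.
Proof. intros H. unfold lacunary. destruct (Rle_dec 1 (Cmod z)); [lra|reflexivity]. Qed.

Lemma Cmod_lacunary_term_sub_le n w z : 1 <= Cmod w -> 1 <= Cmod z ->
  Cmod (Cminus (lacunary_term n w) (lacunary_term n z)) <= (/4)^n * (29^n * Cmod (Cminus w z)) /\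
  Cmod (Cminus (lacunary_term n w) (lacunary_term n z)) <= (/4)^n * 2.
Proof.
  intros Hw Hz. unfold lacunary_term.
  replace (Cminus (Cmult (RtoC ((/4)^n)) (Cpow (Cinv w) (freq n)))
                  (Cmult (RtoC ((/4)^n)) (Cpow (Cinv z) (freq n))))
    with (Cmult (RtoC ((/4)^n)) (Cminus (Cpow (Cinv w) (freq n)) (Cpow (Cinv z) (freq n))))
    by (unfold Cminus; ring).
  rewrite Cmod_RtoC_mult, Rabs_right by (apply Rle_ge, pow_le; lra).
  assert (H1 := Cmod_Cinv_le_1 w Hw). assert (H2 := Cmod_Cinv_le_1 z Hz).
  split; apply Rmult_le_compat_l; try (apply pow_le; lra).
  - rewrite <- INR_freq. eapply Rle_trans; [apply Cpow_lipschitz; auto|].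
    apply Rmult_le_compat_l; [apply pos_INR|apply Cinv_lipschitz; auto].
  - apply Cmod_Cpow_sub_le_2; auto.
Qed.

(* Terms of index [< N] are controlled by [29^N |w - z|], the others by the factor [2^-N]. *)
Lemma lacunary_continuous z : ext_closed z -> forall eps, 0 < eps -> exists delta, 0 < delta /\
  forall w, ext_closed w -> Cmod (Cminus w z) < delta ->
    Cmod (Cminus (lacunary w) (lacunary z)) < eps.
Proof.
  unfold ext_closed. intros Hz eps He.
  destruct (exists_half_pow_lt (eps / 16) ltac:(lra)) as [N HN].
  assert (HP : 0 < 29 ^ N) by (apply pow_lt; lra).
  exists (eps / (8 * 29 ^ N)). split; [apply Rdiv_lt_0_compat; lra|].
  intros w Hw Hwz. set (t := Cmod (Cminus w z)).
  assert (Ht : 29 ^ N * t < eps / 8).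
  { replace (eps / 8) with (29 ^ N * (eps / (8 * 29 ^ N))) by (field; lra).
    apply Rmult_lt_compat_l; auto. }
  unfold lacunary. destruct (Rle_dec 1 (Cmod w)) as [Hw'|]; [|lra].
  destruct (Rle_dec 1 (Cmod z)) as [Hz'|]; [|lra].
  rewrite <- (CSeries_minus _ _ _ _ (lacunary_term_dominated w Hw') (lacunary_term_dominated z Hz')).
  assert (HB : geom_dominated (fun n => Cminus (lacunary_term n w) (lacunary_term n z))
                 (29 ^ N * t + 2 * (/2)^N)).
  { intros n. destruct (Cmod_lacunary_term_sub_le n w z Hw' Hz') as [Hl H2].
    assert (0 <= t) by apply Cmod_ge_0.
    assert (0 <= (/2)^N) by (apply pow_le; lra). assert (0 <= (/2)^n) by (apply pow_le; lra).
    assert (Equarter : (/4)^n = (/2)^n * (/2)^n) by (rewrite <- Rpow_mult_distr; f_equal; field).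
    destruct (lt_dec n N) as [Hn|Hn].
    - assert ((/2)^n * 29^n <= 29 ^ N).
      { apply Rle_trans with (29 ^ n); [|apply Rle_pow; [lra|lia]].
        rewrite <- (Rmult_1_l (29 ^ n)) at 2. apply Rmult_le_compat_r; [apply pow_le; lra|].
        apply pow_le_1_compat; lra. }
      assert (Hs : (/2)^n * 29^n * t <= 29 ^ N * t) by (apply Rmult_le_compat_r; auto).
      eapply Rle_trans; [exact Hl|]. rewrite Equarter.
      apply Rle_trans with ((/2)^n * (29 ^ N * t)); [|nra].
      rewrite Rmult_assoc. apply Rmult_le_compat_l; [lra|]. rewrite <- Rmult_assoc. exact Hs.
    - assert ((/2)^n <= (/2)^N) by (apply pow_le_pow_decr; [lra|lia]).
      assert (Hs : (/2)^n * (/2)^n <= (/2)^N * (/2)^n) by (apply Rmult_le_compat_r; auto).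
      assert (Hp : 0 <= 29 ^ N * t * (/2)^n) by (apply Rmult_le_pos; [apply Rmult_le_pos|]; lra).
      eapply Rle_trans; [exact H2|]. rewrite Equarter.
      set (a := (/2)^n) in *. set (c := (/2)^N) in *. set (p := 29 ^ N * t) in *. lra. }
  eapply Rle_lt_trans; [apply (Cmod_CSeries_le _ _ HB)|]. lra.
Qed.

Definition has_C_derivative (f : C -> C) (z0 L : C) : Prop :=
  forall eps, 0 < eps -> exists d, 0 < d /\ forall z, Cmod (Cminus z z0) < d ->
    Cmod (Cminus (Cminus (f z) (f z0)) (Cmult L (Cminus z z0))) <= eps * Cmod (Cminus z z0).

Lemma has_C_derivative_differentiable f z0 L :
  has_C_derivative f z0 L -> C_differentiable f z0.
Proof.
  intros H. exists L. split; [apply is_linear_scal_l|].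
  intros x Hx.
  assert (Hx2 := @is_filter_lim_locally_unique C_AbsRing (AbsRing_NormedModule C_AbsRing) z0 x Hx).
  subst x. intros eps. destruct (H eps (cond_pos eps)) as [d [Hd Hz]].
  exists (mkposreal _ Hd). intros y Hy.
  change (Cmod (Cminus (Cminus (f y) (f z0)) (Cmult (Cminus y z0) L)) <= eps * Cmod (Cminus y z0)).
  rewrite Cmult_comm. exact (Hz y Hy).
Qed.

Lemma C_differentiable_has_C_derivative f z0 :
  C_differentiable f z0 -> exists L, has_C_derivative f z0 L.
Proof.
  intros [L [_ H]]. exists L. intros eps He.
  destruct (H z0 (fun P HP => HP) (mkposreal _ He)) as [d Hd].
  exists d. split; [apply cond_pos|]. intros z Hz. specialize (Hd z Hz). simpl in Hd.
  change (Cmod (Cminus (Cminus (f z) (f z0)) (Cmult (Cminus z z0) L)) <= eps * Cmod (Cminus z z0))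
    in Hd.
  rewrite Cmult_comm in Hd. exact Hd.
Qed.

Lemma INR_mul_pow_le s N : 0 <= s < 1 -> INR N * s ^ N <= / (1 - s).
Proof.
  intros Hs.
  assert (Hind : INR N * s ^ N * (1 - s) <= 1 - s ^ N).
  { induction N as [|N IH]; [simpl; lra|].
    rewrite S_INR, <- tech_pow_Rmult.
    assert (0 <= s ^ N) by (apply pow_le; lra).
    assert (s ^ N <= 1) by (apply pow_le_1_compat; lra).
    set (p := s ^ N) in *. set (k := INR N) in *.
    assert (s * (k * p * (1 - s)) <= s * (1 - p)) by (apply Rmult_le_compat_l; lra).
    assert (0 <= (1 - s) * (1 - s * p)) by (apply Rmult_le_pos; nra).
    nra. }
  apply (Rmult_le_reg_r (1 - s)); [lra|]. rewrite Rinv_l by lra.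
  generalize (pow_le s N ltac:(lra)). lra.
Qed.

Definition sqr_mul_pow_bound (r : R) : R := / ((1 - sqrt r) * (1 - sqrt r)).

Lemma sqrt_lt_1_of_lt_1 r : 0 <= r < 1 -> 0 <= sqrt r < 1.
Proof. intros Hr. split; [apply sqrt_pos|]. rewrite <- sqrt_1. apply sqrt_lt_1_alt. lra. Qed.

Lemma sqr_INR_mul_pow_le r N : 0 <= r < 1 -> INR N * INR N * r ^ N <= sqr_mul_pow_bound r.
Proof.
  intros Hr. assert (Hs := sqrt_lt_1_of_lt_1 r Hr).
  assert (HN := INR_mul_pow_le (sqrt r) N Hs).
  assert (0 <= INR N * sqrt r ^ N) by (apply Rmult_le_pos; [apply pos_INR|apply pow_le; lra]).
  replace (INR N * INR N * r ^ N) with ((INR N * sqrt r ^ N) * (INR N * sqrt r ^ N))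
    by (rewrite <- (sqrt_sqrt r) at 3 by lra; rewrite Rpow_mult_distr; ring).
  unfold sqr_mul_pow_bound. rewrite Rinv_mult. apply Rmult_le_compat; auto.
Qed.

Lemma sqr_mul_pow_bound_pos r : 0 <= r < 1 -> 0 < sqr_mul_pow_bound r.
Proof.
  intros Hr. assert (Hs := sqrt_lt_1_of_lt_1 r Hr).
  unfold sqr_mul_pow_bound. apply Rinv_0_lt_compat. nra.
Qed.

Definition inv_pow_remainder (z z0 : C) (N : nat) : C :=
  Cplus (Cminus (Cpow (Cinv z) N) (Cpow (Cinv z0) N))
        (Cmult (Cmult (RtoC (INR N)) (Cpow (Cinv z0) (S N))) (Cminus z z0)).

Lemma inv_pow_remainder_succ z z0 N : z <> RtoC 0 -> z0 <> RtoC 0 ->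
  inv_pow_remainder z z0 (S N) =
  Cplus (Cmult (Cinv z) (inv_pow_remainder z z0 N))
        (Cmult (Cmult (RtoC (INR (S N))) (Cpow (Cinv z0) (S N)))
               (Cmult (Cmult (Cinv z) (Cinv z0)) (Cmult (Cminus z z0) (Cminus z z0)))).
Proof.
  intros Hz Hz0. unfold inv_pow_remainder. rewrite S_INR, RtoC_plus. simpl Cpow.
  unfold Cminus. field. split; auto.
Qed.

Lemma Cmod_inv_pow_remainder_le z z0 r N : z <> RtoC 0 -> z0 <> RtoC 0 -> 0 <= r <= 1 ->
  Cmod (Cinv z) <= r -> Cmod (Cinv z0) <= r ->
  Cmod (inv_pow_remainder z z0 N)
    <= INR N * INR N * r ^ (S N) * (Cmod (Cminus z z0) * Cmod (Cminus z z0)).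
Proof.
  intros Hz Hz0 Hr Hu Hu0. set (d := Cmod (Cminus z z0)).
  assert (Hd : 0 <= d) by apply Cmod_ge_0.
  induction N as [|N IH].
  - unfold inv_pow_remainder. simpl. unfold Cminus.
    replace (Cplus (Cplus 1 (Copp 1)) (Cmult (Cmult (RtoC 0) (Cmult (Cinv z0) 1)) (Cplus z (Copp z0))))
      with (RtoC 0) by ring.
    rewrite Cmod_0. lra.
  - rewrite inv_pow_remainder_succ by auto.
    eapply Rle_trans; [apply Cmod_triangle|].
    rewrite !Cmod_mult, Cmod_R, Rabs_right, Cmod_pow by (apply Rle_ge, pos_INR). fold d.
    set (a := r ^ S N * (d * d)).
    assert (Ha : 0 <= a) by (apply Rmult_le_pos; [apply pow_le|]; nra).
    assert (Hk : 0 <= INR (S N)) by apply pos_INR.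
    assert (H1 : Cmod (Cinv z) * Cmod (inv_pow_remainder z z0 N) <= r * (INR N * INR N * a)).
    { apply Rmult_le_compat; auto using Cmod_ge_0. unfold a. lra. }
    assert (H2 : Cmod (Cinv z0) ^ S N * (Cmod (Cinv z) * Cmod (Cinv z0) * (d * d)) <= r * a).
    { assert (Cmod (Cinv z0) ^ S N <= r ^ S N) by (apply pow_incr; split; auto using Cmod_ge_0).
      assert (Cmod (Cinv z) * Cmod (Cinv z0) <= r * r)
        by (apply Rmult_le_compat; auto using Cmod_ge_0).
      assert (Cmod (Cinv z) * Cmod (Cinv z0) * (d * d) <= r * (d * d))
        by (apply Rmult_le_compat_r; nra).
      apply Rle_trans with (r ^ S N * (r * (d * d))); [|unfold a; right; ring].
      apply Rmult_le_compat; auto.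
      - apply pow_le, Cmod_ge_0.
      - apply Rmult_le_pos; [apply Rmult_le_pos; apply Cmod_ge_0|nra]. }
    replace (INR (S N) * INR (S N) * r ^ S (S N) * (d * d)) with (INR (S N) * INR (S N) * (r * a))
      by (unfold a; simpl; ring).
    assert (0 <= r * a) by nra.
    rewrite S_INR in *. generalize (pos_INR N). intros. nra.
Qed.

Definition lacunary_deriv_term (z0 : C) (n : nat) : C :=
  Copp (Cmult (RtoC ((/4)^n)) (Cmult (RtoC (INR (freq n))) (Cpow (Cinv z0) (S (freq n))))).

Section LacunaryDerivative.

Variables (z0 : C) (r : R).
Hypotheses (Hz0 : z0 <> RtoC 0) (Hr : 0 <= r < 1) (Hu0 : Cmod (Cinv z0) <= r).

Lemma lacunary_deriv_term_dominated :
  geom_dominated (lacunary_deriv_term z0) (sqr_mul_pow_bound r).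
Proof.
  intros n. unfold lacunary_deriv_term.
  rewrite Cmod_opp, Cmod_RtoC_mult, Cmod_mult, Cmod_R, Cmod_pow.
  rewrite !Rabs_right by (apply Rle_ge; try apply pos_INR; apply pow_le; lra).
  assert (HN := sqr_INR_mul_pow_le r (freq n) Hr).
  assert (H1 : 1 <= INR (freq n)) by (apply (le_INR 1), freq_ge_1).
  assert (Cmod (Cinv z0) ^ S (freq n) <= r ^ freq n).
  { apply Rle_trans with (r ^ S (freq n)); [apply pow_incr; split; auto using Cmod_ge_0|].
    apply pow_le_pow_decr; [lra|lia]. }
  assert (0 <= Cmod (Cinv z0) ^ S (freq n)) by (apply pow_le, Cmod_ge_0).
  assert (0 <= r ^ freq n) by (apply pow_le; lra).
  assert (INR (freq n) * Cmod (Cinv z0) ^ S (freq n) <= INR (freq n) * r ^ freq n)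
    by (apply Rmult_le_compat_l; lra).
  assert (INR (freq n) * r ^ freq n <= INR (freq n) * INR (freq n) * r ^ freq n).
  { rewrite Rmult_assoc. rewrite <- (Rmult_1_l (INR (freq n) * r ^ freq n)) at 1.
    apply Rmult_le_compat_r; [apply Rmult_le_pos|]; lra. }
  assert (INR (freq n) * Cmod (Cinv z0) ^ S (freq n) <= sqr_mul_pow_bound r) by lra.
  rewrite (Rmult_comm (sqr_mul_pow_bound r)).
  apply Rmult_le_compat; auto using quarter_pow_le_half_pow.
  - apply pow_le; lra.
  - apply Rmult_le_pos; lra.
Qed.

Lemma lacunary_remainder_dominated z : z <> RtoC 0 -> Cmod (Cinv z) <= r ->
  geom_dominated
    (fun n => Cminus (Cminus (lacunary_term n z) (lacunary_term n z0))
                     (Cmult (lacunary_deriv_term z0 n) (Cminus z z0)))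
    (sqr_mul_pow_bound r * (Cmod (Cminus z z0) * Cmod (Cminus z z0))).
Proof.
  intros Hz Hu n. set (d := Cmod (Cminus z z0)).
  replace (Cminus (Cminus (lacunary_term n z) (lacunary_term n z0))
                  (Cmult (lacunary_deriv_term z0 n) (Cminus z z0)))
    with (Cmult (RtoC ((/4)^n)) (inv_pow_remainder z z0 (freq n)))
    by (unfold lacunary_term, lacunary_deriv_term, inv_pow_remainder, Cminus; ring).
  rewrite Cmod_RtoC_mult, Rabs_right by (apply Rle_ge, pow_le; lra).
  assert (HD := Cmod_inv_pow_remainder_le z z0 r (freq n) Hz Hz0 ltac:(lra) Hu Hu0).
  fold d in HD.
  assert (HN := sqr_INR_mul_pow_le r (freq n) Hr).
  assert (r ^ S (freq n) <= r ^ freq n) by (apply pow_le_pow_decr; [lra|lia]).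
  assert (0 <= INR (freq n) * INR (freq n)) by (apply Rmult_le_pos; apply pos_INR).
  assert (INR (freq n) * INR (freq n) * r ^ S (freq n) <= sqr_mul_pow_bound r)
    by (eapply Rle_trans; [|exact HN]; apply Rmult_le_compat_l; lra).
  assert (Cmod (inv_pow_remainder z z0 (freq n)) <= sqr_mul_pow_bound r * (d * d))
    by (eapply Rle_trans; [exact HD|]; apply Rmult_le_compat_r; [apply Rle_0_sqr|lra]).
  rewrite (Rmult_comm (sqr_mul_pow_bound r * (d * d))).
  apply Rmult_le_compat; auto using quarter_pow_le_half_pow, Cmod_ge_0. apply pow_le; lra.
Qed.

End LacunaryDerivative.

(* Near [z0] both [|1/z|] and [|1/z0|] are bounded by [r = 2 / (1 + |z0|) < 1], so the
   remainder series is dominated by [C(r) |z - z0|^2]. *)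
Lemma lacunary_has_C_derivative z0 : 1 < Cmod z0 ->
  has_C_derivative lacunary z0 (CSeries (lacunary_deriv_term z0)).
Proof.
  intros Hz0. set (rho := (1 + Cmod z0) / 2). set (r := / rho).
  assert (Hrho : 1 < rho < Cmod z0) by (unfold rho; lra).
  assert (Hr : 0 <= r < 1).
  { unfold r. split; [left; apply Rinv_0_lt_compat; lra|].
    rewrite <- Rinv_1. apply Rinv_lt_contravar; lra. }
  assert (Hinv : forall z, rho <= Cmod z -> Cmod (Cinv z) <= r).
  { intros z Hz. rewrite Cmod_inv by (apply Cmod_ge_1_neq_0; lra).
    apply Rinv_le_contravar; lra. }
  assert (Hz0' : z0 <> RtoC 0) by (apply Cmod_ge_1_neq_0; lra).
  set (C0 := sqr_mul_pow_bound r). assert (HC : 0 < C0) by (apply sqr_mul_pow_bound_pos, Hr).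
  intros eps He. exists (Rmin (Cmod z0 - rho) (eps / (4 * C0))).
  split; [apply Rmin_glb_lt; [lra|apply Rdiv_lt_0_compat; lra]|].
  intros z Hz. set (d := Cmod (Cminus z z0)) in *.
  assert (Hd1 : d < Cmod z0 - rho) by (generalize (Rmin_l (Cmod z0 - rho) (eps / (4 * C0))); lra).
  assert (Hd2 : d < eps / (4 * C0)) by (generalize (Rmin_r (Cmod z0 - rho) (eps / (4 * C0))); lra).
  assert (Hzr : rho < Cmod z) by (generalize (Cmod_sub_ge z z0); fold d; lra).
  unfold lacunary. destruct (Rle_dec 1 (Cmod z)) as [Hz1|]; [|lra].
  destruct (Rle_dec 1 (Cmod z0)) as [Hz01|]; [|lra].
  rewrite <- (CSeries_first_order _ _ _ _ _ _ _ (lacunary_term_dominated z Hz1)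
    (lacunary_term_dominated z0 Hz01) (lacunary_deriv_term_dominated z0 r Hr (Hinv z0 ltac:(lra)))).
  eapply Rle_trans; [apply (Cmod_CSeries_le _ _ (lacunary_remainder_dominated z0 r Hz0' Hr
    (Hinv z0 ltac:(lra)) z (Cmod_ge_1_neq_0 z Hz1) (Hinv z ltac:(lra))))|].
  fold d C0.
  assert (0 <= d) by apply Cmod_ge_0.
  assert (4 * C0 * d <= eps)
    by (replace eps with (4 * C0 * (eps / (4 * C0))) by (field; lra); apply Rmult_le_compat_l; lra).
  replace (4 * (C0 * (d * d))) with ((4 * C0 * d) * d) by ring.
  apply Rmult_le_compat_r; auto.
Qed.

Lemma lacunary_A0 : A0 lacunary.
Proof.
  split; [|split; [|split]].
  - apply lacunary_continuous.
  - intros z Hz. eapply has_C_derivative_differentiable, lacunary_has_C_derivative, Hz.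
  - intros eps He. exists (Rmax 1 (4 / eps)). intros z Hz.
    assert (H1 : 1 < Cmod z) by (generalize (Rmax_l 1 (4 / eps)); lra).
    assert (H2 : 4 / eps < Cmod z) by (generalize (Rmax_r 1 (4 / eps)); lra).
    eapply Rle_lt_trans; [apply Cmod_lacunary_le; lra|].
    apply (Rmult_lt_reg_r (Cmod z / eps)); [apply Rdiv_lt_0_compat; lra|].
    replace (4 / Cmod z * (Cmod z / eps)) with (4 / eps) by (field; lra).
    replace (eps * (Cmod z / eps)) with (Cmod z) by (field; lra). exact H2.
  - apply lacunary_lt_1.
Qed.

Lemma lacunary_term_expi n y :
  lacunary_term n (expi y) = Cmult (RtoC ((/4)^n)) (expi (- (INR (freq n) * y))).
Proof. unfold lacunary_term. rewrite Cinv_expi, Cpow_expi. do 2 f_equal. ring. Qed.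

Lemma lacunary_expi y : lacunary (expi y) = CSeries (fun n => lacunary_term n (expi y)).
Proof. unfold lacunary. rewrite Cmod_expi. destruct (Rle_dec 1 1); [reflexivity|lra]. Qed.

Lemma fst_lacunary_expi y : fst (lacunary (expi y)) = weierstrass y.
Proof.
  rewrite lacunary_expi. apply Series_ext. intros n.
  rewrite lacunary_term_expi. unfold expi; simpl. rewrite cos_neg. ring.
Qed.

Lemma sin_freq_mul n y : sin (INR (freq n) * y) = cos (INR (freq n) * (y - PI / 2)).
Proof.
  destruct (freq_1mod4 n) as [j ->].
  replace (INR (4 * j + 1) * (y - PI / 2))
    with (- (PI / 2 - INR (4 * j + 1) * y) + 2 * IZR (- Z.of_nat j) * PI)
    by (rewrite opp_IZR, <- INR_IZR_INZ, plus_INR, mult_INR; simpl; field).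
  rewrite cos_period_Z, cos_neg, cos_shift. reflexivity.
Qed.

Lemma snd_lacunary_expi y : snd (lacunary (expi y)) = - weierstrass (y - PI / 2).
Proof.
  rewrite lacunary_expi. unfold CSeries, weierstrass. cbv beta iota.
  rewrite <- Series_opp. apply Series_ext. intros n.
  rewrite lacunary_term_expi. unfold expi; simpl. rewrite sin_neg, sin_freq_mul. ring.
Qed.

Lemma unbounded_right_slopes_fst_lacunary : unbounded_right_slopes (fun y => fst (lacunary (expi y))).
Proof.
  apply (unbounded_right_slopes_ext _ weierstrass);
    [apply fst_lacunary_expi|apply weierstrass_unbounded_right_slopes].
Qed.

Lemma unbounded_right_slopes_snd_lacunary : unbounded_right_slopes (fun y => snd (lacunary (expi y))).
Proof.
  apply (unbounded_right_slopes_ext _ (fun y => - weierstrass (y - PI / 2)));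
    [apply snd_lacunary_expi|apply unbounded_right_slopes_opp_shift, weierstrass_unbounded_right_slopes].
Qed.

(** * Density *)

Lemma Cmod_RtoC_mult_nonneg lam z : 0 <= lam -> Cmod (Cmult (RtoC lam) z) = lam * Cmod z.
Proof. intros H. rewrite Cmod_RtoC_mult, Rabs_right by lra. reflexivity. Qed.

Lemma Cmod_sub_mult_RtoC lam w z : 0 <= lam ->
  Cmod (Cminus (Cmult (RtoC lam) w) (Cmult (RtoC lam) z)) = lam * Cmod (Cminus w z).
Proof.
  intros H. rewrite <- Cmod_RtoC_mult_nonneg by exact H. f_equal. unfold Cminus. ring.
Qed.

Lemma lt_div_mult_pos a b c : 0 < c -> a < b / c -> c * a < b.
Proof. intros Hc H. replace b with (c * (b / c)) by (field; lra). apply Rmult_lt_compat_l; lra. Qed.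

Lemma has_C_derivative_plus_scal f g c z0 Lf Lg :
  has_C_derivative f z0 Lf -> has_C_derivative g z0 Lg ->
  has_C_derivative (fun z => Cplus (f z) (Cmult (RtoC c) (g z))) z0 (Cplus Lf (Cmult (RtoC c) Lg)).
Proof.
  intros Hf Hg eps He.
  assert (Hc : 0 < Rabs c + 1) by (generalize (Rabs_pos c); lra).
  destruct (Hf (eps / 2) ltac:(lra)) as [d1 [Hd1 K1]].
  destruct (Hg (eps / 2 / (Rabs c + 1))) as [d2 [Hd2 K2]]; [apply Rdiv_lt_0_compat; lra|].
  exists (Rmin d1 d2). split; [apply Rmin_glb_lt; auto|]. intros z Hz.
  specialize (K1 z ltac:(generalize (Rmin_l d1 d2); lra)).
  specialize (K2 z ltac:(generalize (Rmin_r d1 d2); lra)).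
  replace (Cminus (Cminus (Cplus (f z) (Cmult (RtoC c) (g z))) (Cplus (f z0) (Cmult (RtoC c) (g z0))))
                  (Cmult (Cplus Lf (Cmult (RtoC c) Lg)) (Cminus z z0)))
    with (Cplus (Cminus (Cminus (f z) (f z0)) (Cmult Lf (Cminus z z0)))
                (Cmult (RtoC c) (Cminus (Cminus (g z) (g z0)) (Cmult Lg (Cminus z z0)))))
    by (unfold Cminus; ring).
  eapply Rle_trans; [apply Cmod_triangle|]. rewrite Cmod_RtoC_mult.
  assert (Rabs c * (eps / 2 / (Rabs c + 1)) <= eps / 2).
  { apply (Rmult_le_reg_r (Rabs c + 1)); [lra|].
    replace (Rabs c * (eps / 2 / (Rabs c + 1)) * (Rabs c + 1)) with (Rabs c * (eps / 2))
      by (field; lra). nra. }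
  assert (Rabs c * Cmod (Cminus (Cminus (g z) (g z0)) (Cmult Lg (Cminus z z0)))
            <= Rabs c * (eps / 2 / (Rabs c + 1) * Cmod (Cminus z z0)))
    by (apply Rmult_le_compat_l; [apply Rabs_pos|exact K2]).
  generalize (Cmod_ge_0 (Cminus z z0)). nra.
Qed.

Lemma A0_plus_scal f g c : A0 f -> A0 g -> A0 (fun z => Cplus (f z) (Cmult (RtoC c) (g z))).
Proof.
  intros [Hfc [Hfd [Hfl Hf0]]] [Hgc [Hgd [Hgl Hg0]]].
  assert (Hc : 0 < Rabs c + 1) by (generalize (Rabs_pos c); lra).
  assert (Hsplit : forall a b e, Cmod a < e / 2 -> Cmod b < e / 2 / (Rabs c + 1) ->
            Cmod (Cplus a (Cmult (RtoC c) b)) < e).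
  { intros a b e Ha Hb. eapply Rle_lt_trans; [apply Cmod_triangle|].
    rewrite Cmod_RtoC_mult.
    assert ((Rabs c + 1) * Cmod b < e / 2) by (apply lt_div_mult_pos; auto).
    generalize (Cmod_ge_0 b). nra. }
  split; [|split; [|split]].
  - intros z Hz eps He.
    destruct (Hfc z Hz (eps / 2) ltac:(lra)) as [d1 [Hd1 K1]].
    destruct (Hgc z Hz (eps / 2 / (Rabs c + 1))) as [d2 [Hd2 K2]];
      [apply Rdiv_lt_0_compat; lra|].
    exists (Rmin d1 d2). split; [apply Rmin_glb_lt; auto|]. intros w Hw Hwz.
    replace (Cminus (Cplus (f w) (Cmult (RtoC c) (g w))) (Cplus (f z) (Cmult (RtoC c) (g z))))
      with (Cplus (Cminus (f w) (f z)) (Cmult (RtoC c) (Cminus (g w) (g z)))) by (unfold Cminus; ring).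
    apply Hsplit; [apply K1|apply K2]; auto.
    + generalize (Rmin_l d1 d2); lra.
    + generalize (Rmin_r d1 d2); lra.
  - intros z Hz.
    destruct (C_differentiable_has_C_derivative f z (Hfd z Hz)) as [Lf HLf].
    destruct (C_differentiable_has_C_derivative g z (Hgd z Hz)) as [Lg HLg].
    eapply has_C_derivative_differentiable, has_C_derivative_plus_scal; eauto.
  - intros eps He. destruct (Hfl (eps / 2) ltac:(lra)) as [M1 HM1].
    destruct (Hgl (eps / 2 / (Rabs c + 1))) as [M2 HM2]; [apply Rdiv_lt_0_compat; lra|].
    exists (Rmax M1 M2). intros z Hz. apply Hsplit; [apply HM1|apply HM2].
    + generalize (Rmax_l M1 M2); lra.
    + generalize (Rmax_r M1 M2); lra.
  - intros z Hz. rewrite Hf0, Hg0 by exact Hz. apply injective_projections; simpl; ring.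
Qed.

Definition dilate (f : C -> C) (lam : R) (z : C) : C :=
  if Rle_dec 1 (Cmod z) then f (Cmult (RtoC lam) z) else RtoC 0.

Section Dilation.

Variables (f : C -> C) (lam : R).
Hypotheses (Hf : A0 f) (Hlam : 1 <= lam).

Lemma ext_closed_mult_RtoC z : ext_closed z -> ext_closed (Cmult (RtoC lam) z).
Proof. unfold ext_closed. intros Hz. rewrite Cmod_RtoC_mult_nonneg by lra. nra. Qed.

Lemma dilate_has_C_derivative z0 L : 1 < Cmod z0 ->
  has_C_derivative f (Cmult (RtoC lam) z0) L ->
  has_C_derivative (dilate f lam) z0 (Cmult (RtoC lam) L).
Proof.
  intros Hz0 H eps He.
  destruct (H (eps / lam) ltac:(apply Rdiv_lt_0_compat; lra)) as [d [Hdp K]].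
  exists (Rmin (d / lam) (Cmod z0 - 1)). split; [apply Rmin_glb_lt; [apply Rdiv_lt_0_compat|]; lra|].
  intros z Hz.
  assert (H1 : lam * Cmod (Cminus z z0) < d)
    by (apply lt_div_mult_pos; [lra|]; generalize (Rmin_l (d / lam) (Cmod z0 - 1)); lra).
  assert (Hz1 : 1 <= Cmod z)
    by (generalize (Cmod_sub_ge z z0) (Rmin_r (d / lam) (Cmod z0 - 1)); lra).
  unfold dilate. destruct (Rle_dec 1 (Cmod z)); [|lra]. destruct (Rle_dec 1 (Cmod z0)); [|lra].
  specialize (K (Cmult (RtoC lam) z)). rewrite Cmod_sub_mult_RtoC in K by lra.
  replace (Cminus (Cmult (RtoC lam) z) (Cmult (RtoC lam) z0)) with (Cmult (RtoC lam) (Cminus z z0))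
    in K by (unfold Cminus; ring).
  replace (Cmult (Cmult (RtoC lam) L) (Cminus z z0)) with (Cmult L (Cmult (RtoC lam) (Cminus z z0)))
    by ring.
  eapply Rle_trans; [exact (K H1)|]. right. field. lra.
Qed.

Lemma dilate_A0 : A0 (dilate f lam).
Proof.
  destruct Hf as [Hc [Hd [Hlim Hs]]].
  split; [|split; [|split]].
  - intros z Hz eps He.
    destruct (Hc _ (ext_closed_mult_RtoC z Hz) eps He) as [d [Hd1 K]].
    exists (d / lam). split; [apply Rdiv_lt_0_compat; lra|]. intros w Hw Hwz.
    unfold dilate, ext_closed in *.
    destruct (Rle_dec 1 (Cmod w)); [|lra]. destruct (Rle_dec 1 (Cmod z)); [|lra].
    apply K; [apply ext_closed_mult_RtoC, Hw|].
    rewrite Cmod_sub_mult_RtoC by lra. apply lt_div_mult_pos; [lra|exact Hwz].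
  - intros z Hz.
    assert (Hlz : 1 < Cmod (Cmult (RtoC lam) z)) by (rewrite Cmod_RtoC_mult_nonneg; nra).
    destruct (C_differentiable_has_C_derivative f _ (Hd _ Hlz)) as [L HL].
    eapply has_C_derivative_differentiable, dilate_has_C_derivative; eauto.
  - intros eps He. destruct (Hlim eps He) as [M HM].
    exists (Rmax 1 M). intros z Hz. unfold dilate.
    generalize (Rmax_l 1 M) (Rmax_r 1 M). intros.
    destruct (Rle_dec 1 (Cmod z)); [|lra].
    apply HM. rewrite Cmod_RtoC_mult_nonneg by lra. nra.
  - intros z Hz. unfold dilate. destruct (Rle_dec 1 (Cmod z)); [lra|reflexivity].
Qed.

Lemma dilate_expi y : dilate f lam (expi y) = f (Cmult (RtoC lam) (expi y)).
Proof. unfold dilate. rewrite Cmod_expi. destruct (Rle_dec 1 1); [reflexivity|lra]. Qed.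

End Dilation.

(* For [lam > 1] the circle is mapped into the open domain, where [f] is holomorphic. *)
Lemma dilate_expi_right_lipschitz f lam theta : A0 f -> 1 < lam ->
  exists B d, 0 < d /\ forall y, theta < y < theta + d ->
    Cmod (Cminus (dilate f lam (expi y)) (dilate f lam (expi theta))) <= B * (y - theta).
Proof.
  intros [_ [Hd _]] Hl.
  assert (Hz : 1 < Cmod (Cmult (RtoC lam) (expi theta)))
    by (rewrite Cmod_RtoC_mult_nonneg, Cmod_expi by lra; lra).
  destruct (C_differentiable_has_C_derivative f _ (Hd _ Hz)) as [L H].
  destruct (H 1 ltac:(lra)) as [d [Hdp K]].
  exists ((Cmod L + 1) * (2 * lam)), (d / (2 * lam)). split; [apply Rdiv_lt_0_compat; lra|].
  intros y Hy. rewrite !(dilate_expi f lam).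
  set (w := Cmult (RtoC lam) (expi y)). set (w0 := Cmult (RtoC lam) (expi theta)) in *.
  assert (Hw : Cmod (Cminus w w0) <= 2 * lam * (y - theta)).
  { unfold w, w0. rewrite Cmod_sub_mult_RtoC by lra.
    generalize (expi_lipschitz y theta). rewrite Rabs_right by lra. nra. }
  assert (Hw2 : Cmod (Cminus w w0) < d).
  { eapply Rle_lt_trans; [exact Hw|].
    replace d with (2 * lam * (d / (2 * lam))) by (field; lra). apply Rmult_lt_compat_l; lra. }
  specialize (K w Hw2).
  replace (Cminus (f w) (f w0))
    with (Cplus (Cminus (Cminus (f w) (f w0)) (Cmult L (Cminus w w0))) (Cmult L (Cminus w w0)))
    by (unfold Cminus; ring).
  eapply Rle_trans; [apply Cmod_triangle|]. rewrite Cmod_mult.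
  assert (Cmod L * Cmod (Cminus w w0) <= Cmod L * (2 * lam * (y - theta)))
    by (apply Rmult_le_compat_l; [apply Cmod_ge_0|exact Hw]).
  nra.
Qed.

Lemma open_Cmod_ball c r : open (fun w => Cmod (Cminus w c) < r).
Proof.
  intros x Hx. assert (He : 0 < (r - Cmod (Cminus x c)) / 2) by lra.
  exists (mkposreal _ He). intros y [H1 H2].
  change (Rabs (fst y - fst x) < (r - Cmod (Cminus x c)) / 2) in H1.
  change (Rabs (snd y - snd x) < (r - Cmod (Cminus x c)) / 2) in H2.
  assert (Cmod (Cminus y x) < r - Cmod (Cminus x c))
    by (eapply Rle_lt_trans; [apply Cmod_le_Rabs_fst_snd|]; simpl; unfold Rminus in *; lra).
  replace (Cminus y c) with (Cplus (Cminus y x) (Cminus x c)) by (unfold Cminus; ring).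
  eapply Rle_lt_trans; [apply Cmod_triangle|]. lra.
Qed.

Lemma list_min_max {I : Type} (a b : I -> R) (l : list I) : (forall i, 0 < a i) ->
  exists m M, 0 < m /\ forall i, In i l -> m <= a i /\ b i <= M.
Proof.
  intros Ha. induction l as [|i0 l [m [M [Hm H]]]].
  - exists 1, 0. split; [lra|]. intros i [].
  - exists (Rmin m (a i0)), (Rmax M (b i0)). split; [apply Rmin_glb_lt; auto|].
    intros i [<-|Hi]; [split; [apply Rmin_r|apply Rmax_r]|].
    destruct (H i Hi). split.
    + eapply Rle_trans; [apply Rmin_l|auto].
    + eapply Rle_trans; [eauto|apply Rmax_l].
Qed.

Lemma compactC_bounded K : compactC K -> exists B, forall z, K z -> Cmod z <= B.
Proof.
  intros HK.
  destruct (HK C (fun c w => Cmod (Cminus w c) < 1)) as [l Hl].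
  - intros c. apply open_Cmod_ball.
  - intros z _. exists z. unfold Cminus. rewrite Cplus_opp_r, Cmod_0. lra.
  - destruct (list_min_max (fun _ => 1) (fun c => Cmod c + 1) l) as [m [B [_ HB]]]; [intros; lra|].
    exists B. intros z Hz. destruct (Hl z Hz) as [c [Hc Hzc]]. destruct (HB c Hc) as [_ HcB].
    replace z with (Cplus (Cminus z c) c) by (unfold Cminus; ring).
    eapply Rle_trans; [apply Cmod_triangle|]. lra.
Qed.

(* Cover [K] by balls of half the continuity radius: any two points [delta]-close with one
   in [K] then lie in a common continuity ball. *)
Lemma A0_uniformly_continuous_on_compact f K eps : A0 f -> compactC K ->
  (forall z, K z -> ext_closed z) -> 0 < eps ->
  exists delta, 0 < delta /\ forall z w, K z -> ext_closed w -> Cmod (Cminus w z) < delta ->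
    Cmod (Cminus (f w) (f z)) < eps.
Proof.
  intros [Hc _] HK HKe He.
  set (good := fun q : C * R => 0 < snd q /\ forall w, ext_closed w ->
     Cmod (Cminus w (fst q)) < snd q -> Cmod (Cminus (f w) (f (fst q))) < eps / 2).
  destruct (HK {q | good q} (fun i w => Cmod (Cminus w (fst (proj1_sig i))) < snd (proj1_sig i) / 2))
    as [l Hl].
  - intros i. apply open_Cmod_ball.
  - intros z Hz. destruct (Hc z (HKe z Hz) (eps / 2) ltac:(lra)) as [d [Hd Kd]].
    exists (exist good (z, d) (conj Hd Kd)). simpl.
    unfold Cminus. rewrite Cplus_opp_r, Cmod_0. lra.
  - destruct (list_min_max (fun i : {q | good q} => snd (proj1_sig i) / 2) (fun _ => 0) l)
      as [delta [M [Hdelta Hl_min]]].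
    { intros i. destruct (proj2_sig i) as [Hq _]. lra. }
    exists delta. split; [exact Hdelta|]. intros z w Hz Hw Hwz.
    destruct (Hl z Hz) as [i [Hin Hzc]]. destruct (Hl_min i Hin) as [Hmin _].
    destruct (proj2_sig i) as [Hd Kd].
    set (c := fst (proj1_sig i)) in *. set (d := snd (proj1_sig i)) in *.
    assert (Hwc : Cmod (Cminus w c) < d).
    { replace (Cminus w c) with (Cplus (Cminus w z) (Cminus z c)) by (unfold Cminus; ring).
      eapply Rle_lt_trans; [apply Cmod_triangle|]. lra. }
    assert (K1 := Kd w Hw Hwc). assert (K2 := Kd z (HKe z Hz) ltac:(lra)).
    replace (Cminus (f w) (f z)) with (Cplus (Cminus (f w) (f c)) (Copp (Cminus (f z) (f c))))
      by (unfold Cminus; ring).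
    eapply Rle_lt_trans; [apply Cmod_triangle|]. rewrite Cmod_opp. lra.
Qed.

Lemma A0_dilate_approx f K eps : A0 f -> compactC K -> (forall z, K z -> ext_closed z) ->
  0 < eps -> exists lam, 1 < lam /\ forall z, K z -> Cmod (Cminus (dilate f lam z) (f z)) < eps.
Proof.
  intros Hf HK HKe He.
  destruct (A0_uniformly_continuous_on_compact f K eps Hf HK HKe He) as [delta [Hd Hunif]].
  destruct (compactC_bounded K HK) as [B HB].
  assert (HB0 : 0 <= Rmax B 0) by apply Rmax_r.
  set (s := delta / (2 * (Rmax B 0 + 1))).
  assert (Hs : 0 < s) by (apply Rdiv_lt_0_compat; lra).
  exists (1 + s). split; [lra|]. intros z Hz.
  assert (Hz1 := HKe z Hz). unfold ext_closed in Hz1.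
  unfold dilate. destruct (Rle_dec 1 (Cmod z)); [|lra].
  apply Hunif; [exact Hz| |].
  - unfold ext_closed. rewrite Cmod_RtoC_mult_nonneg by lra. nra.
  - replace (Cminus (Cmult (RtoC (1 + s)) z) z) with (Cmult (RtoC s) z)
      by (unfold Cminus; rewrite RtoC_plus; ring).
    rewrite Cmod_RtoC_mult_nonneg by lra.
    assert (Cmod z <= Rmax B 0) by (eapply Rle_trans; [apply HB, Hz|apply Rmax_l]).
    assert (s * (Rmax B 0 + 1) = delta / 2) by (unfold s; field; lra).
    nra.
Qed.

Lemma A0_circle_continuous g : A0 g ->
  forall z, Cmod z = 1 -> forall eps, 0 < eps -> exists delta, 0 < delta /\
    forall w, Cmod w = 1 -> Cmod (Cminus w z) < delta -> Cmod (Cminus (g w) (g z)) < eps.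
Proof.
  intros [Hc _] z Hz eps He.
  destruct (Hc z ltac:(unfold ext_closed; lra) eps He) as [d [Hd Kd]].
  exists d. split; [exact Hd|]. intros w Hw. apply Kd. unfold ext_closed. lra.
Qed.

Lemma class_Z_of_unbounded_right_slopes g : A0 g ->
  unbounded_right_slopes (fun y => fst (g (expi y))) ->
  unbounded_right_slopes (fun y => snd (g (expi y))) -> class_Z g.
Proof.
  intros Hg H1 H2. split; [apply A0_circle_continuous, Hg|].
  intros theta. split; apply unbounded_right_slopes_limsup; assumption.
Qed.

Lemma dilate_components_right_lipschitz f lam : A0 f -> 1 < lam ->
  locally_right_lipschitz (fun y => fst (dilate f lam (expi y))) /\
  locally_right_lipschitz (fun y => snd (dilate f lam (expi y))).
Proof.
  intros Hf Hl. split; intros theta;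
    destruct (dilate_expi_right_lipschitz f lam theta Hf Hl) as [B [d [Hd K]]];
    exists B, d; split; auto; intros y Hy; (eapply Rle_trans; [|apply (K y Hy)]).
  - exact (re_le_Cmod (Cminus _ _)).
  - exact (Rabs_snd_le_Cmod (Cminus _ _)).
Qed.

Lemma A0_dense_class_Z : A0_dense (fun f => class_Z f).
Proof.
  intros U HU [f [Hf Uf]].
  destruct (HU f Hf Uf) as [K [eps [HK [HKe [He HKg]]]]].
  destruct (A0_dilate_approx f K (eps / 2) Hf HK HKe ltac:(lra)) as [lam [Hl Hap]].
  set (c := eps / 16). assert (Hc : 0 < c) by (unfold c; lra).
  set (g := fun z => Cplus (dilate f lam z) (Cmult (RtoC c) (lacunary z))).
  assert (Hg : A0 g) by (apply A0_plus_scal; [apply dilate_A0; auto; lra|apply lacunary_A0]).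
  exists g. split; [exact Hg|split].
  - apply HKg; [exact Hg|]. intros z Hz.
    assert (Hz1 : 1 <= Cmod z) by (apply HKe, Hz).
    replace (Cminus (g z) (f z))
      with (Cplus (Cminus (dilate f lam z) (f z)) (Cmult (RtoC c) (lacunary z)))
      by (unfold g, Cminus; ring).
    eapply Rle_lt_trans; [apply Cmod_triangle|].
    rewrite Cmod_RtoC_mult_nonneg by lra.
    assert (/ Cmod z <= 1) by (rewrite <- Rinv_1; apply Rinv_le_contravar; lra).
    assert (4 / Cmod z <= 4) by (unfold Rdiv; lra).
    assert (c * Cmod (lacunary z) <= c * 4)
      by (apply Rmult_le_compat_l; [lra|eapply Rle_trans; [apply Cmod_lacunary_le|]; auto]).
    specialize (Hap z Hz). unfold c in *. lra.
  - destruct (dilate_components_right_lipschitz f lam Hf Hl) as [Hfst Hsnd].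
    apply class_Z_of_unbounded_right_slopes; [exact Hg| |].
    + apply (unbounded_right_slopes_ext _
        (fun y => fst (dilate f lam (expi y)) + c * fst (lacunary (expi y))));
        [intros y; simpl; ring|].
      apply unbounded_right_slopes_add_scal; auto using unbounded_right_slopes_fst_lacunary.
    + apply (unbounded_right_slopes_ext _
        (fun y => snd (dilate f lam (expi y)) + c * snd (lacunary (expi y))));
        [intros y; simpl; ring|].
      apply unbounded_right_slopes_add_scal; auto using unbounded_right_slopes_snd_lacunary.
Qed.

(** * The G_delta decomposition *)

Lemma reduce_angle theta : exists m : Z, 0 <= theta - 2 * IZR m * PI <= 2 * PI.
Proof.
  assert (HP := PI_RGT_0).
  destruct (archimed (theta / (2 * PI))) as [H1 H2].
  exists (up (theta / (2 * PI)) - 1)%Z. rewrite minus_IZR.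
  set (u := IZR (up (theta / (2 * PI)))) in *.
  replace theta with (theta / (2 * PI) * (2 * PI)) at 1 2 by (field; lra).
  split; nra.
Qed.

Definition unit_circle (z : C) : Prop := exists t, z = expi t.

Lemma unit_circle_ext_closed z : unit_circle z -> ext_closed z.
Proof. intros [t ->]. unfold ext_closed. rewrite Cmod_expi. lra. Qed.

Lemma unit_circle_compact : compactC unit_circle.
Proof.
  intros I O Hop Hcov.
  assert (Good : forall t : R, exists p : posreal * I,
    forall y, Rabs (y - t) < fst p -> O (snd p) (expi y)).
  { intros t. destruct (Hcov (expi t) (ex_intro _ t eq_refl)) as [i Hi].
    destruct (Hop i (expi t) Hi) as [e He]. exists (e, i). simpl. intros y Hy.
    apply He. split.
    - change (Rabs (cos y - cos t) < e). eapply Rle_lt_trans; [apply cos_lipschitz|exact Hy].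
    - change (Rabs (sin y - sin t) < e). eapply Rle_lt_trans; [apply sin_lipschitz|exact Hy]. }
  set (F := fun t => proj1_sig (constructive_indefinite_description _ (Good t))).
  assert (HF : forall t y, Rabs (y - t) < fst (F t) -> O (snd (F t)) (expi y))
    by (intros t; exact (proj2_sig (constructive_indefinite_description _ (Good t)))).
  apply NNPP. intros Hn.
  apply (compactness_list 1 (0, tt) (2 * PI, tt) (fun x => fst (F (fst x)))). intros [l Hl].
  apply Hn. exists (map (fun x : Compactness.Tn 1 R => snd (F (fst x))) l).
  intros z [t ->]. destruct (reduce_angle t) as [m Hm].
  set (t0 := t - 2 * IZR m * PI) in *.
  replace t with (t0 + 2 * IZR m * PI) by (unfold t0; ring). rewrite expi_period.
  destruct (Hl (t0, tt)) as [[x1 []] [Hx1 [_ [Hx3 _]]]]; [simpl; split; [lra|trivial]|].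
  exists (snd (F x1)). split.
  - apply (in_map (fun x : Compactness.Tn 1 R => snd (F (fst x))) l (x1, tt)), Hx1.
  - apply HF, Hx3.
Qed.

Definition steep_at (pr : C -> R) (k : nat) (g : C -> C) (theta y : R) : Prop :=
  theta < y < theta + / (INR k + 1) /\
  INR k * (y - theta) < Rabs (pr (g (expi y)) - pr (g (expi theta))).

Definition steep (k : nat) (g : C -> C) : Prop :=
  forall theta, (exists y, steep_at fst k g theta y) /\ (exists y, steep_at snd k g theta y).

Lemma Rabs_sub_ge_perturbed a b a' b' c :
  Rabs (a - b) - (Rabs (a' - a) + Rabs (b' - c) + Rabs (c - b)) <= Rabs (a' - b').
Proof. unfold Rabs. repeat destruct Rcase_abs; lra. Qed.

Lemma steep_at_shift pr k g theta y (m : Z) : steep_at pr k g theta y ->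
  steep_at pr k g (theta + 2 * IZR m * PI) (y + 2 * IZR m * PI).
Proof.
  intros [Hy HM]. unfold steep_at. rewrite !expi_period.
  replace (y + 2 * IZR m * PI - (theta + 2 * IZR m * PI)) with (y - theta) by ring.
  split; [lra|exact HM].
Qed.

(* Keep the slack [s] of the strict inequality: moving [theta] costs [s/4] by continuity of
   [f], moving [f] to [g] costs [2 eta], and the bound [k (y - theta)] grows by [k eta]. *)
Lemma steep_at_stable pr k f theta y :
  (forall a b, Rabs (pr a - pr b) <= Cmod (Cminus a b)) -> A0 f -> steep_at pr k f theta y ->
  exists eta, 0 < eta /\ forall theta' g, Rabs (theta' - theta) < eta ->
    (forall t, Cmod (Cminus (g (expi t)) (f (expi t))) < eta) -> steep_at pr k g theta' y.
Proof.
  intros Hpr [Hc _] [[Hy1 Hy2] Hy3].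
  pose (F := fun t => pr (f (expi t))). change (INR k * (y - theta) < Rabs (F y - F theta)) in Hy3.
  set (s := Rabs (F y - F theta) - INR k * (y - theta)).
  assert (Hs : 0 < s) by (unfold s; lra).
  assert (Hk : 0 <= INR k) by apply pos_INR.
  destruct (Hc (expi theta) (unit_circle_ext_closed _ (ex_intro _ theta eq_refl)) (s / 4))
    as [df [Hdf Kdf]]; [lra|].
  set (eta := Rmin (Rmin (df / 2) (y - theta)) (Rmin (theta + / (INR k + 1) - y) (s / (8 * (INR k + 1))))).
  assert (He : 0 < eta) by (repeat apply Rmin_glb_lt; try apply Rdiv_lt_0_compat; lra).
  assert (E1 : eta <= df / 2) by (eapply Rle_trans; apply Rmin_l).
  assert (E2 : eta <= y - theta) by (eapply Rle_trans; [apply Rmin_l|apply Rmin_r]).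
  assert (E3 : eta <= theta + / (INR k + 1) - y) by (eapply Rle_trans; [apply Rmin_r|apply Rmin_l]).
  assert (E4 : eta <= s / (8 * (INR k + 1))) by (eapply Rle_trans; apply Rmin_r).
  assert (Hke : (INR k + 1) * eta <= s / 8).
  { replace (s / 8) with ((INR k + 1) * (s / (8 * (INR k + 1)))) by (field; lra).
    apply Rmult_le_compat_l; lra. }
  exists eta. split; [exact He|]. intros theta' g Ht Hg.
  assert (Ht' := Rabs_def2 _ _ Ht). split; [lra|].
  assert (HF : Rabs (F theta' - F theta) < s / 4).
  { eapply Rle_lt_trans; [apply Hpr|]. apply Kdf.
    - apply unit_circle_ext_closed. now exists theta'.
    - eapply Rle_lt_trans; [apply expi_lipschitz|]. lra. }
  assert (G1 : Rabs (pr (g (expi y)) - F y) < eta) by (eapply Rle_lt_trans; [apply Hpr|apply Hg]).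
  assert (G2 : Rabs (pr (g (expi theta')) - F theta') < eta)
    by (eapply Rle_lt_trans; [apply Hpr|apply Hg]).
  assert (Htr := Rabs_sub_ge_perturbed (F y) (F theta) (pr (g (expi y))) (pr (g (expi theta')))
                   (F theta')).
  assert (INR k * (y - theta') <= INR k * (y - theta) + INR k * eta)
    by (rewrite <- Rmult_plus_distr_l; apply Rmult_le_compat_l; lra).
  unfold s in *. nra.
Qed.

Lemma steep_locally_stable k f theta : A0 f -> steep k f ->
  exists eta : posreal, forall theta' g, Rabs (theta' - theta) < eta ->
    (forall t, Cmod (Cminus (g (expi t)) (f (expi t))) < eta) ->
    (exists y, steep_at fst k g theta' y) /\ (exists y, steep_at snd k g theta' y).
Proof.
  intros Hf Hsteep. destruct (Hsteep theta) as [[y1 H1] [y2 H2]].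
  destruct (steep_at_stable fst k f theta y1 (fun a b => re_le_Cmod (Cminus a b)) Hf H1)
    as [e1 [He1 K1]].
  destruct (steep_at_stable snd k f theta y2 (fun a b => Rabs_snd_le_Cmod (Cminus a b)) Hf H2)
    as [e2 [He2 K2]].
  exists (mkposreal _ (Rmin_glb_lt _ _ _ He1 He2)). simpl. intros theta' g Ht Hg.
  generalize (Rmin_l e1 e2) (Rmin_r e1 e2). intros.
  split; [exists y1; apply K1|exists y2; apply K2]; try lra; intros t; specialize (Hg t); lra.
Qed.

(* A Lebesgue number [d] for the stability radii over [[0, 2 pi]] gives one uniform
   neighbourhood of [f] on the circle. *)
Lemma steep_open k : A0_open (steep k).
Proof.
  intros f Hf Hsteep.
  set (delta := fun theta => proj1_sig (constructive_indefinite_description _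
                  (steep_locally_stable k f theta Hf Hsteep))).
  assert (Hdelta : forall theta theta' g, Rabs (theta' - theta) < delta theta ->
     (forall t, Cmod (Cminus (g (expi t)) (f (expi t))) < delta theta) ->
     (exists y, steep_at fst k g theta' y) /\ (exists y, steep_at snd k g theta' y))
    by (intros theta; exact (proj2_sig (constructive_indefinite_description _
          (steep_locally_stable k f theta Hf Hsteep)))).
  destruct (compactness_value_1d 0 (2 * PI) delta) as [d Hd].
  exists unit_circle, d. split; [apply unit_circle_compact|].
  split; [apply unit_circle_ext_closed|]. split; [apply cond_pos|].
  intros g Hg Hgf theta. destruct (reduce_angle theta) as [m Hm].
  set (t0 := theta - 2 * IZR m * PI) in *.
  apply NNPP. intros Hn. apply (Hd t0 Hm). intros [t [_ [Ht2 Ht3]]]. apply Hn.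
  destruct (Hdelta t t0 g Ht2) as [[y1 Hy1] [y2 Hy2]].
  { intros t'. eapply Rlt_le_trans; [apply Hgf; now exists t'|exact Ht3]. }
  replace theta with (t0 + 2 * IZR m * PI) by (unfold t0; ring).
  split; [exists (y1 + 2 * IZR m * PI)|exists (y2 + 2 * IZR m * PI)]; apply steep_at_shift; auto.
Qed.

Lemma steep_at_of_limsup pr k g theta :
  limsup_right_infinite (fun y => pr (g (expi y))) theta -> exists y, steep_at pr k g theta y.
Proof.
  intros HZ.
  assert (Hk : 0 < / (INR k + 1)) by (apply Rinv_0_lt_compat; generalize (pos_INR k); lra).
  destruct (HZ (INR k) _ Hk) as [y [Hy HM]]. exists y. split; [exact Hy|].
  unfold Rdiv in HM. rewrite Rabs_mult, Rabs_inv, (Rabs_right (y - theta)) in HM by lra.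
  apply (Rmult_lt_reg_r (/ (y - theta))); [apply Rinv_0_lt_compat; lra|].
  replace (INR k * (y - theta) * / (y - theta)) with (INR k) by (field; lra). exact HM.
Qed.

Lemma limsup_of_steep_at pr g theta : (forall k, exists y, steep_at pr k g theta y) ->
  limsup_right_infinite (fun y => pr (g (expi y))) theta.
Proof.
  intros Hk M delta Hd.
  destruct (exists_INR_gt (Rmax M (/ delta))) as [k Hkk].
  assert (HMk : M < INR k) by (generalize (Rmax_l M (/ delta)); lra).
  assert (Hdk : / delta < INR k) by (generalize (Rmax_r M (/ delta)); lra).
  assert (Hd2 : / (INR k + 1) < delta).
  { assert (0 < / delta) by (apply Rinv_0_lt_compat; lra).
    rewrite <- (Rinv_inv delta). apply Rinv_lt_contravar; nra. }
  destruct (Hk k) as [y [[Hy1 Hy2] HM]]. exists y. split; [lra|].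
  unfold Rdiv. rewrite Rabs_mult, Rabs_inv, (Rabs_right (y - theta)) by lra.
  apply (Rmult_lt_reg_r (y - theta)); [lra|]. rewrite Rmult_assoc, Rinv_l by lra.
  assert (M * (y - theta) <= INR k * (y - theta)) by (apply Rmult_le_compat_r; lra). lra.
Qed.

Lemma class_Z_iff_steep f : A0 f -> (class_Z f <-> forall k, steep k f).
Proof.
  intros Hf. split.
  - intros [_ HZ] k theta. destruct (HZ theta).
    split; apply steep_at_of_limsup; assumption.
  - intros Hsteep. split; [apply A0_circle_continuous, Hf|].
    intros theta. split; apply limsup_of_steep_at; intros k; apply (Hsteep k theta).
Qed.

Theorem proposition2p4 :
  A0_Gdelta (fun f => class_Z f) /\ A0_dense (fun f => class_Z f).
Proof.
  split.
  - exists steep. split; [apply steep_open|apply class_Z_iff_steep].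
  - apply A0_dense_class_Z.
Qed.
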